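(* For every BST $T$ and every set $F$ of nodes of $T$ containing the root of $T$, the intervals in the extended hand $E(T,F)$ are pairwise disjoint.
   Context: Let $T$ be a BST and $F$ a set of nodes (fingers) including the root. $S(T,F)$ is the Steiner tree of $F$ in $T$ (the minimal connected subtree containing $F$). The set of pseudofingers $P(T,F)$ consists of $F$ together with all nodes of degree $3$ in $S(T,F)$. For pseudofingers $x,y$ with $x$ an ancestor of $y$ such that the path between them contains no other pseudofinger, the tendon $\tau_{x,y}$ is the set of nodes strictly between $x$ and $y$ on this path. Its half tendons are $\tau^{<}_{x,y}=\{z\in\tau_{x,y}: z<y\}$ and $\tau^{>}_{x,y}=\{z\in\tau_{x,y}:z>y\}$; $H(T,F)$ is the set of all (nonempty) half tendons. A half tendon $\tau$ is identified with the interval $[\min\tau,\max\tau]$ of keys and a pseudofinger $f$ with $[f,f]$. The extended hand is $E(T,F)=P(T,F)\cup H(T,F)$, viewed as a set of intervals. *)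

From mathcomp Require Import all_boot.
Set Implicit Arguments. Unset Strict Implicit. Unset Printing Implicit Defensive.

(* Binary trees with natural-number keys; a node is identified with its key
   (keys of a BST are pairwise distinct). *)
Inductive tree := Leaf | Node of tree & nat & tree.

Fixpoint nodes (t : tree) : seq nat :=
  match t with Leaf => [::] | Node l k r => nodes l ++ k :: nodes r end.

Fixpoint bst (t : tree) : bool :=
  match t with
  | Leaf => true
  | Node l k r => [&& bst l, bst r, all (fun x => x < k) (nodes l)
                    & all (fun x => k < x) (nodes r)]
  end.

Definition troot (t : tree) : option nat :=
  match t with Leaf => None | Node _ k _ => Some k end.

Fixpoint sub (t : tree) (u : nat) : tree :=
  match t with
  | Leaf => Leaf
  | Node l k r =>
      if k == u then t else
      match sub l u with Leaf => sub r u | s => s end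
  end.

Definition anc (t : tree) (u v : nat) : bool :=
  (u \in nodes t) && (v \in nodes (sub t u)).
Definition sanc (t : tree) (u v : nat) : bool := anc t u v && (u != v).

Definition children (t : tree) (u : nat) : seq nat :=
  match sub t u with Leaf => [::] | Node l _ r => pmap id [:: troot l; troot r] end.

Definition adj (t : tree) (u v : nat) : bool :=
  (u \in children t v) || (v \in children t u).

(* z lies on the tree path between x and y: z is an ancestor of x or of y,
   and a descendant of every common ancestor of x and y *)
Definition on_path (t : tree) (x y z : nat) : bool :=
  (anc t z x || anc t z y) &&
  all (fun w => (anc t w x && anc t w y) ==> anc t w z) (nodes t).

(* membership in the Steiner tree S(T,F): union of the paths between fingers *)
Definition steiner (t : tree) (F : seq nat) (z : nat) : bool :=
  has (fun x => has (fun y => on_path t x y z) F) F.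

Definition degS (t : tree) (F : seq nat) (v : nat) : nat :=
  count (fun u => steiner t F u && adj t u v) (nodes t).

Definition pseudo (t : tree) (F : seq nat) (v : nat) : bool :=
  (v \in nodes t) &&
  ((v \in F) || (steiner t F v && (degS t F v == 3))).

Definition tendon_ok (t : tree) (F : seq nat) (x y : nat) : bool :=
  [&& pseudo t F x, pseudo t F y, sanc t x y &
      all (fun z => (sanc t x z && sanc t z y) ==> ~~ pseudo t F z) (nodes t)].

Definition tendon (t : tree) (x y : nat) : seq nat :=
  [seq z <- nodes t | sanc t x z && sanc t z y].

(* half tendons: b = true gives tau^<_{x,y}, b = false gives tau^>_{x,y} *)
Definition half (t : tree) (x y : nat) (b : bool) : seq nat :=
  [seq z <- tendon t x y | if b then z < y else y < z].

Inductive hand_elt := PF of nat | HT of nat & nat & bool.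

Definition in_hand (t : tree) (F : seq nat) (e : hand_elt) : bool :=
  match e with
  | PF f => pseudo t F f
  | HT x y b => tendon_ok t F x y && (half t x y b != [::])
  end.

Definition elt_nodes (t : tree) (e : hand_elt) : seq nat :=
  match e with PF f => [:: f] | HT x y b => half t x y b end.

Definition interval (t : tree) (e : hand_elt) : nat * nat :=
  let s := elt_nodes t e in (foldr minn (head 0 s) s, foldr maxn 0 s).

Definition disjoint_iv (a b : nat * nat) : bool := (a.2 < b.1) || (b.2 < a.1).

From Pilot Require Import Defs.
From mathcomp Require Import all_boot zify.
Set Implicit Arguments. Unset Strict Implicit. Unset Printing Implicit Defensive.

(* Since the root is a finger, the Steiner tree S(T,F) consists of the nodes
   lying above some finger.  A node of S(T,F) that lies below a tendon node
   but off the path to the lower end of the tendon would make the branching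
   node of the two a degree-3 pseudofinger strictly inside the tendon, which is
   impossible.  Two consequences follow: every node of S(T,F) whose key lies
   between the smallest and the largest key of an element of E(T,F) belongs to
   that element, and distinct elements of E(T,F) share no node.  Two node sets
   of S(T,F) with these properties have disjoint key intervals. *)

Lemma mem_Node l k r x :
  (x \in nodes (Node l k r)) = [|| x == k, x \in nodes l | x \in nodes r].
Proof. by rewrite /= mem_cat in_cons orbCA. Qed.

Lemma bst_left l k r : bst (Node l k r) -> bst l.
Proof. by case/and4P. Qed.

Lemma bst_right l k r : bst (Node l k r) -> bst r.
Proof. by case/and4P. Qed.

Lemma bst_lt_left l k r x : bst (Node l k r) -> x \in nodes l -> x < k.
Proof. by case/and4P=> _ _ /allP lt_l _ /lt_l. Qed.

Lemma bst_gt_right l k r x : bst (Node l k r) -> x \in nodes r -> k < x.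
Proof. by case/and4P=> _ _ _ /allP gt_r /gt_r. Qed.

Lemma bst_nodes_disjoint l k r x :
  bst (Node l k r) -> x \in nodes l -> x \in nodes r -> False.
Proof. by move=> tb /(bst_lt_left tb) + /(bst_gt_right tb); lia. Qed.

Lemma bst_mem_lt l k r y :
  bst (Node l k r) -> y \in nodes (Node l k r) -> y < k -> y \in nodes l.
Proof.
by move=> tb; rewrite mem_Node => /or3P[/eqP-> | // | /(bst_gt_right tb)]; lia.
Qed.

Lemma bst_mem_gt l k r y :
  bst (Node l k r) -> y \in nodes (Node l k r) -> k < y -> y \in nodes r.
Proof.
by move=> tb; rewrite mem_Node => /or3P[/eqP-> | /(bst_lt_left tb) | //]; lia.
Qed.

Lemma bst_uniq t : bst t -> uniq (nodes t).
Proof.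
elim: t => //= l IHl k r IHr tb.
rewrite cat_uniq /= IHl ?IHr ?(bst_left tb) ?(bst_right tb) //= andbT negb_or.
have kr : k \notin nodes r by apply/negP=> /(bst_gt_right tb); rewrite ltnn.
rewrite kr andbT; apply/andP; split.
  by apply/negP=> /(bst_lt_left tb); rewrite ltnn.
by apply/hasPn=> x xr; apply/negP=> xl; apply: bst_nodes_disjoint tb xl xr.
Qed.

Lemma sub_notin t u : u \notin nodes t -> sub t u = Leaf.
Proof.
elim: t => // l IHl k r IHr; rewrite mem_Node !negb_or => /and3P[uk ul ur] /=.
by rewrite eq_sym (negbTE uk) IHl // IHr.
Qed.

Lemma sub_mem t u : u \in nodes t -> exists l r, sub t u = Node l u r.
Proof.
elim: t => // l IHl k r IHr; rewrite mem_Node /=.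
have [->|uk] := eqVneq k u; first by exists l, r.
case: (boolP (u \in nodes l)) => [/IHl[a [b ->]] _ | /sub_notin-> /IHr //].
by exists a, b.
Qed.

Lemma sub_Node l k r u : u != k ->
  sub (Node l k r) u = if u \in nodes l then sub l u else sub r u.
Proof.
move=> uk /=; rewrite eq_sym (negbTE uk).
by case: ifP => [/sub_mem[a [b ->]] | /negbT/sub_notin->].
Qed.

Lemma sub_left l k r u :
  bst (Node l k r) -> u \in nodes l -> sub (Node l k r) u = sub l u.
Proof.
move=> tb ul; rewrite sub_Node ?ul //.
by apply: contraTneq ul => ->; apply/negP=> /(bst_lt_left tb); rewrite ltnn.
Qed.

Lemma sub_right l k r u :
  bst (Node l k r) -> u \in nodes r -> sub (Node l k r) u = sub r u.
Proof.
move=> tb ur; have ul : u \in nodes l = false.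
  by apply/negP=> ul; apply: bst_nodes_disjoint tb ul ur.
rewrite sub_Node ?ul //.
by apply: contraTneq ur => ->; apply/negP=> /(bst_gt_right tb); rewrite ltnn.
Qed.

Lemma sub_eq_Node t u l w r : sub t u = Node l w r -> u \in nodes t /\ w = u.
Proof.
move=> tu; have ut : u \in nodes t by apply/negPn/negP=> /sub_notin; rewrite tu.
by split=> //; case: (sub_mem ut) => a [b]; rewrite tu => -[].
Qed.

Lemma sub_nodes t u : {subset nodes (sub t u) <= nodes t}.
Proof.
elim: t => //= l IHl k r IHr x; rewrite mem_cat in_cons.
case: eqP => [_|_]; first by rewrite mem_cat in_cons.
by case: (sub l u) IHl => [_ /IHr -> | a b c /(_ x) + xs]; rewrite ?orbT // => ->.
Qed.

Lemma bst_sub t u : bst t -> bst (sub t u).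
Proof.
elim: t => //= l IHl k r IHr tb; case: eqP => // _.
by case: (sub l u) (IHl (bst_left tb)) => // _; apply: IHr (bst_right tb).
Qed.

Lemma sub_sub t u v : bst t -> v \in nodes (sub t u) -> sub (sub t u) v = sub t v.
Proof.
elim: t => // l IHl k r IHr tb.
have [->|uk] := eqVneq u k; first by rewrite /= eqxx.
rewrite sub_Node //; case: ifP => _ /[dup] vs /sub_nodes v_in.
  by rewrite sub_left // IHl // (bst_left tb).
by rewrite sub_right // IHr // (bst_right tb).
Qed.

Lemma anc_mem1 t u v : anc t u v -> u \in nodes t.
Proof. by case/andP. Qed.

Lemma anc_mem2 t u v : anc t u v -> v \in nodes t.
Proof. by case/andP=> _ /sub_nodes. Qed.

Lemma anc_notin t u v : u \notin nodes t -> anc t u v = false.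
Proof. by move=> /negbTE ut; rewrite /anc ut. Qed.

Lemma anc_refl t u : u \in nodes t -> anc t u u.
Proof.
by move=> ut; rewrite /anc ut; case: (sub_mem ut) => a [b ->]; rewrite mem_Node eqxx.
Qed.

Lemma anc_root l k r v : anc (Node l k r) k v = (v \in nodes (Node l k r)).
Proof. by rewrite /anc /= eqxx mem_Node eqxx. Qed.

Lemma anc_left l k r u v :
  bst (Node l k r) -> u \in nodes l -> anc (Node l k r) u v = anc l u v.
Proof. by move=> tb ul; rewrite /anc sub_left // mem_Node ul orbT. Qed.

Lemma anc_right l k r u v :
  bst (Node l k r) -> u \in nodes r -> anc (Node l k r) u v = anc r u v.
Proof. by move=> tb ur; rewrite /anc sub_right // mem_Node ur !orbT. Qed.

Lemma ancE l k r u v : bst (Node l k r) ->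
  anc (Node l k r) u v =
    [|| (u == k) && (v \in nodes (Node l k r)), anc l u v | anc r u v].
Proof.
move=> tb; have [->|uk] := eqVneq u k.
  rewrite anc_root !anc_notin ?orbF //; apply/negP.
    by move=> /(bst_gt_right tb); rewrite ltnn.
  by move=> /(bst_lt_left tb); rewrite ltnn.
have [ul|nul] := boolP (u \in nodes l).
  rewrite anc_left // (@anc_notin r) ?orbF //.
  by apply/negP=> /(bst_nodes_disjoint tb ul).
have [ur|nur] := boolP (u \in nodes r); first by rewrite anc_right // (@anc_notin l).
by rewrite !anc_notin // mem_Node (negbTE nul) (negbTE nur) (negbTE uk).
Qed.

Lemma ancL l k r u v : bst (Node l k r) -> anc l u v -> anc (Node l k r) u v.
Proof. by move=> tb a; rewrite ancE // a orbT. Qed.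

Lemma ancR l k r u v : bst (Node l k r) -> anc r u v -> anc (Node l k r) u v.
Proof. by move=> tb a; rewrite ancE // a !orbT. Qed.

Lemma anc_root_eq l k r w : bst (Node l k r) -> anc (Node l k r) w k -> w = k.
Proof.
move=> tb; rewrite ancE // => /or3P[/andP[/eqP//] | /anc_mem2 | /anc_mem2].
  by move=> /(bst_lt_left tb); rewrite ltnn.
by move=> /(bst_gt_right tb); rewrite ltnn.
Qed.

Lemma troot_mem t z : troot t = Some z -> z \in nodes t.
Proof. by case: t => // l k r [<-]; rewrite mem_Node eqxx. Qed.

Lemma anc_troot t u z : bst t -> troot t = Some z -> anc t u z -> u = z.
Proof. by case: t => // l k r tb [<-]; apply: anc_root_eq. Qed.

Lemma anc_trans t u v w : bst t -> anc t u v -> anc t v w -> anc t u w.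
Proof.
move=> tb /andP[ut vs] /andP[_ ws]; rewrite /anc ut.
by rewrite -(sub_sub tb vs) in ws; apply: sub_nodes ws.
Qed.

Lemma anc_subE t a u v : bst t -> u \in nodes (sub t a) -> anc (sub t a) u v = anc t u v.
Proof. by move=> tb us; rewrite /anc sub_sub // us (sub_nodes us). Qed.

Lemma anc_antisym t u v : bst t -> anc t u v -> anc t v u -> u = v.
Proof.
elim: t => [|l IHl k r IHr] tb; first by case/andP.
have [->|uk] := eqVneq u k; first by move=> _ /(anc_root_eq tb).
have [->|vk] := eqVneq v k; first by move/(anc_root_eq tb).
rewrite !ancE // (negbTE uk) (negbTE vk) /= => /orP[] a /orP[] b.
- exact: IHl (bst_left tb) a b.
- by case: (bst_nodes_disjoint tb (anc_mem1 a) (anc_mem2 b)).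
- by case: (bst_nodes_disjoint tb (anc_mem2 b) (anc_mem1 a)).
- exact: IHr (bst_right tb) a b.
Qed.

Lemma anc_total t u v w : bst t -> anc t u w -> anc t v w -> anc t u v || anc t v u.
Proof.
elim: t => [|l IHl k r IHr] tb; first by case/andP.
have [->|uk] := eqVneq u k; first by move=> _ /anc_mem1 vt; rewrite anc_root vt.
have [->|vk] := eqVneq v k; first by move=> /anc_mem1 ut _; rewrite anc_root ut orbT.
rewrite [anc _ u w]ancE // [anc _ v w]ancE // (negbTE uk) (negbTE vk) /=.
move=> /orP[] a /orP[] b.
- by case/orP: (IHl (bst_left tb) a b) => /(ancL tb) ->; rewrite ?orbT.
- by case: (bst_nodes_disjoint tb (anc_mem2 a) (anc_mem2 b)).
- by case: (bst_nodes_disjoint tb (anc_mem2 b) (anc_mem2 a)).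
- by case/orP: (IHr (bst_right tb) a b) => /(ancR tb) ->; rewrite ?orbT.
Qed.

Lemma anc_contig t a b c : bst t -> anc t a b ->
  minn a b <= c -> c <= maxn a b -> c \in nodes t -> anc t a c.
Proof.
elim: t => [|l IHl k r IHr] tb; first by case/andP.
have [->|ak] := eqVneq a k; first by move=> _ _ _; rewrite anc_root.
rewrite ancE // (negbTE ak) /= => /orP[] ab ac cb; rewrite mem_Node.
  have c_k : c < k.
    apply: leq_ltn_trans cb _.
    by rewrite gtn_max !(bst_lt_left tb) ?(anc_mem1 ab) ?(anc_mem2 ab).
  case/or3P=> [/eqP ck | cl | /(bst_gt_right tb)/(ltn_trans c_k)]; last by rewrite ltnn.
    by rewrite ck ltnn in c_k.
  exact: ancL tb (IHl (bst_left tb) ab ac cb cl).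
have k_c : k < c.
  apply: leq_trans ac.
  by rewrite leq_min !(bst_gt_right tb) ?(anc_mem1 ab) ?(anc_mem2 ab).
case/or3P=> [/eqP ck | /(bst_lt_left tb)/(ltn_trans k_c) | cr].
- by rewrite ck ltnn in k_c.
- by rewrite ltnn.
- exact: ancR tb (IHr (bst_right tb) ab ac cb cr).
Qed.

Lemma anc_side t u v w : bst t -> anc t u v -> u != v -> anc t v w -> (u < v) = (u < w).
Proof.
elim: t => [|l IHl k r IHr] tb; first by case/andP.
have [->|uk] := eqVneq u k.
  move=> _ kv; rewrite ancE // eq_sym (negbTE kv) /= => /orP[] a.
    have v_k := bst_lt_left tb (anc_mem1 a); have w_k := bst_lt_left tb (anc_mem2 a).
    by rewrite (leq_gtF (ltnW v_k)) (leq_gtF (ltnW w_k)).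
  by rewrite (bst_gt_right tb (anc_mem1 a)) (bst_gt_right tb (anc_mem2 a)).
rewrite ancE // (negbTE uk) /= => /orP[] a uv.
  by rewrite anc_left ?(anc_mem2 a) //; apply: IHl (bst_left tb) a uv.
by rewrite anc_right ?(anc_mem2 a) //; apply: IHr (bst_right tb) a uv.
Qed.

Lemma anc_split t y y' : bst t -> y \in nodes t -> y' \in nodes t ->
  [\/ anc t y y', anc t y' y |
      exists z, [/\ anc t z y, anc t z y' & (y < z < y') || (y' < z < y)]].
Proof.
elim: t => // l IHl k r IHr tb.
have [->|yk] := eqVneq y k; first by move=> _ y't; apply: Or31; rewrite anc_root.
have [->|y'k] := eqVneq y' k; first by move=> yt _; apply: Or32; rewrite anc_root.
rewrite !mem_Node (negbTE yk) (negbTE y'k) /= => /orP[] yl /orP[] y'l.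
- case: (IHl (bst_left tb) yl y'l) => [a | a | [z [zy zy' yzy']]].
  + exact/Or31/(ancL tb).
  + exact/Or32/(ancL tb).
  + by apply: Or33; exists z; split; rewrite ?(ancL tb).
- apply: Or33; exists k.
  by rewrite !anc_root !mem_Node yl y'l !orbT (bst_lt_left tb yl) (bst_gt_right tb y'l).
- apply: Or33; exists k.
  by rewrite !anc_root !mem_Node yl y'l !orbT (bst_lt_left tb y'l) (bst_gt_right tb yl) orbT.
- case: (IHr (bst_right tb) yl y'l) => [a | a | [z [zy zy' yzy']]].
  + exact/Or31/(ancR tb).
  + exact/Or32/(ancR tb).
  + by apply: Or33; exists z; split; rewrite ?(ancR tb).
Qed.

Lemma anc_split_below t a y y' : bst t -> anc t a y -> anc t a y' ->
  [\/ anc t y y', anc t y' y |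
      exists z, [/\ anc t a z, anc t z y, anc t z y' & (y < z < y') || (y' < z < y)]].
Proof.
move=> tb ay ay'.
case: (anc_split tb (anc_mem2 ay) (anc_mem2 ay')) => [? | ? | [z [zy zy' yzy']]].
- exact: Or31.
- exact: Or32.
apply: Or33; exists z; split=> //.
(* If [z] were strictly above [a], then [y] and [y'] would lie on the same side of [z]. *)
case/orP: (anc_total tb ay zy) => // za.
have [->|az] := eqVneq z a; first exact: anc_refl (anc_mem1 ay).
by move: (anc_side tb za az ay) (anc_side tb za az ay'); lia.
Qed.

Lemma sanc_anc_trans t x a k : bst t -> sanc t x a -> anc t a k -> sanc t x k.
Proof.
move=> tb /andP[xa xna] ak; rewrite /sanc (anc_trans tb xa ak).
by apply: contraNneq xna => xk; apply/eqP/(anc_antisym tb xa); rewrite xk.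
Qed.

Lemma mem_pmap_troot l r z :
  (z \in pmap id [:: troot l; troot r]) = (troot l == Some z) || (troot r == Some z).
Proof.
by case: l => [|? a ?]; case: r => [|? b ?]; rewrite /= ?in_cons ?in_nil ?orbF // ?(eq_sym z).
Qed.

Lemma children_root l k r : children (Node l k r) k = pmap id [:: troot l; troot r].
Proof. by rewrite /children /= eqxx. Qed.

Lemma children_Node l k r u : u != k ->
  children (Node l k r) u = if u \in nodes l then children l u else children r u.
Proof. by move=> uk; rewrite /children sub_Node //; case: ifP. Qed.

Lemma children_sanc t u z : bst t -> z \in children t u -> sanc t u z.
Proof.
rewrite /children; case E: (sub t u) => [|l w r] // tb.
case: (sub_eq_Node E) => ut wu; rewrite wu in E.
have sb : bst (Node l u r) by rewrite -E bst_sub.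
rewrite mem_pmap_troot /sanc /anc ut E mem_Node => /orP[] /eqP/troot_mem zs.
  by rewrite zs orbT neq_ltn (bst_lt_left sb zs) orbT.
by rewrite zs !orbT neq_ltn (bst_gt_right sb zs).
Qed.

Lemma children_Node_left l k r z : bst (Node l k r) -> z \in nodes l -> forall u,
  (z \in children (Node l k r) u) = if u == k then troot l == Some z else z \in children l u.
Proof.
move=> tb zl u; have [->|uk] := eqVneq u k.
  rewrite children_root mem_pmap_troot; apply: orb_idr => /eqP/troot_mem zr.
  by case: (bst_nodes_disjoint tb zl zr).
rewrite children_Node //; case: ifP => // ul; apply/idP/idP.
  case/(children_sanc (bst_right tb))/andP=> /anc_mem2 zr _.
  by case: (bst_nodes_disjoint tb zl zr).
by case/(children_sanc (bst_left tb))/andP=> /anc_mem1; rewrite ul.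
Qed.

Lemma children_Node_right l k r z : bst (Node l k r) -> z \in nodes r -> forall u,
  (z \in children (Node l k r) u) = if u == k then troot r == Some z else z \in children r u.
Proof.
move=> tb zr u; have [->|uk] := eqVneq u k.
  rewrite children_root mem_pmap_troot; apply: orb_idl => /eqP/troot_mem zl.
  by case: (bst_nodes_disjoint tb zl zr).
rewrite children_Node //; case: ifP => // ul; apply/idP/idP.
  case/(children_sanc (bst_left tb))/andP=> /anc_mem2 zl _.
  by case: (bst_nodes_disjoint tb zl zr).
case/(children_sanc (bst_right tb))/andP=> /anc_mem1 ur _.
by case: (bst_nodes_disjoint tb ul ur).
Qed.

Lemma children_parent t z : bst t -> z \in nodes t -> troot t != Some z ->
  exists p, forall u, (z \in children t u) = (u == p).
Proof.
elim: t => // l IHl k r IHr tb.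
suff parent_in s : bst s -> z \in nodes s -> k \notin nodes s ->
    (troot s != Some z -> exists p, forall u, (z \in children s u) = (u == p)) ->
    (forall u, (z \in children (Node l k r) u) =
               if u == k then troot s == Some z else z \in children s u) ->
    exists p, forall u, (z \in children (Node l k r) u) = (u == p).
  rewrite mem_Node => /or3P[/eqP-> | zl | zr]; first by rewrite /= eqxx.
    move=> _; apply: (parent_in l (bst_left tb) zl _ (IHl (bst_left tb) zl)).
      by apply/negP=> /(bst_lt_left tb); rewrite ltnn.
    exact: children_Node_left.
  move=> _; apply: (parent_in r (bst_right tb) zr _ (IHr (bst_right tb) zr)).
    by apply/negP=> /(bst_gt_right tb); rewrite ltnn.
  exact: children_Node_right.
move=> sb zs ks IHs Es; have [sz | snz] := eqVneq (troot s) (Some z).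
  exists k => u; rewrite Es; case: eqP => _; first by rewrite sz eqxx.
  by apply/negbTE/negP=> /(children_sanc sb)/andP[/(anc_troot sb sz)->]; rewrite eqxx.
case: (IHs snz) => p pE; exists p => u; rewrite Es (negbTE snz) pE.
have ps : p \in nodes s by move: (pE p); rewrite eqxx => /(children_sanc sb)/andP[/anc_mem1].
by case: eqVneq => // ->; apply/esym/negbTE; apply: contraNneq ks => ->.
Qed.

Lemma count_mem_subset (T : eqType) (s u : seq T) : uniq s -> uniq u ->
  {subset s <= u} -> count (mem s) u = size s.
Proof.
move=> s_uniq u_uniq su; rewrite -size_filter; apply/perm_size/uniq_perm => //.
  exact: filter_uniq.
by move=> x; rewrite mem_filter andb_idr //; apply: su.
Qed.

(* [interval t e] unfolds to [key_range (elt_nodes t e)]. *)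
Definition key_range (s : seq nat) : nat * nat :=
  (foldr minn (head 0 s) s, foldr maxn 0 s).

Lemma foldr_minn_mem x0 s : foldr minn x0 s \in x0 :: s.
Proof.
elim: s => /= [|a s IH]; first exact: mem_head.
rewrite /minn; case: ifP => _; first by rewrite !in_cons eqxx orbT.
by move: IH; rewrite !in_cons => /orP[] ->; rewrite ?orbT.
Qed.

Lemma foldr_maxn_mem s : s != [::] -> foldr maxn 0 s \in s.
Proof.
elim: s => // a [|b s] IH _; first by rewrite /= maxn0 mem_head.
rewrite /= /maxn; case: ifP => _; last exact: mem_head.
by rewrite in_cons IH ?orbT.
Qed.

Lemma key_range_mem s : s != [::] -> ((key_range s).1 \in s) && ((key_range s).2 \in s).
Proof.
case: s => // a s nz; rewrite /key_range foldr_maxn_mem // andbT.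
by have := foldr_minn_mem a (a :: s); rewrite in_cons => /orP[/eqP-> |]; rewrite ?mem_head.
Qed.

Definition range_closed (P : pred nat) (s : seq nat) : Prop :=
  forall k, P k -> (key_range s).1 <= k <= (key_range s).2 -> k \in s.

Lemma disjoint_key_range (P : pred nat) s1 s2 : s1 != [::] -> s2 != [::] ->
  {subset s1 <= P} -> {subset s2 <= P} -> range_closed P s1 -> range_closed P s2 ->
  (forall k, k \in s1 -> k \in s2 -> False) -> disjoint_iv (key_range s1) (key_range s2).
Proof.
move=> /key_range_mem/andP[lo1 _] /key_range_mem/andP[lo2 _] P1 P2 cl1 cl2 dis.
apply/negPn/negP; rewrite negb_or -!leqNgt => /andP[lo2_hi1 lo1_hi2].
case: (leqP (key_range s1).1 (key_range s2).1) => lo12.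
  by apply: dis (cl1 _ (P2 _ lo2) _) lo2; rewrite lo12.
by apply: dis lo1 (cl2 _ (P1 _ lo1) _); rewrite (ltnW lo12).
Qed.

(* Plain [half] would denote ssrnat's halving function. *)
Lemma mem_half t x y b z :
  (z \in Defs.half t x y b) = [&& sanc t x z, sanc t z y & if b then z < y else y < z].
Proof.
rewrite /Defs.half /tendon !mem_filter andbC -andbA.
by case xz: (sanc t x z) => //=; case/andP: xz => /anc_mem2 ->.
Qed.

Definition above_finger (t : tree) (F : seq nat) (k : nat) : bool := has (anc t k) F.

Section RootedFingers.

Variables (t : tree) (F : seq nat) (root : nat).
Hypotheses (t_bst : bst t) (t_root : troot t = Some root) (root_finger : root \in F).

Lemma above_finger_anc u v : anc t u v -> above_finger t F v -> above_finger t F u.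
Proof. by move=> uv /hasP[f fF vf]; apply/hasP; exists f => //; apply: anc_trans uv vf. Qed.

Lemma steinerE k : steiner t F k = above_finger t F k.
Proof.
apply/idP/idP.
  by case/hasP=> x xF /hasP[y yF /andP[/orP[] a _]]; apply/hasP; [exists x | exists y].
(* [k] lies on the path from the root to a finger below [k]. *)
case/hasP=> f fF kf; apply/hasP; exists root => //; apply/hasP; exists f => //.
rewrite /on_path kf orbT; apply/allP=> w _; apply/implyP.
case/andP=> /(anc_troot t_bst t_root)-> _.
move: t_root kf; case: (t) => // l k' r [<-] kf.
by rewrite anc_root (anc_mem1 kf).
Qed.

Lemma pseudo_above_finger v : pseudo t F v -> above_finger t F v.
Proof.
case/andP=> vt /orP[vF | /andP[]]; last by rewrite steinerE.
by apply/hasP; exists v => //; apply: anc_refl.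
Qed.

Lemma degS_eq3 z l1 cl l2 r1 cr r2 p :
  sub t z = Node (Node l1 cl l2) z (Node r1 cr r2) ->
  (forall u, (z \in children t u) = (u == p)) ->
  above_finger t F cl -> above_finger t F cr -> above_finger t F p ->
  degS t F z = 3.
Proof.
move=> E pE fcl fcr fp; have sb : bst (Node (Node l1 cl l2) z (Node r1 cr r2)).
  by rewrite -E bst_sub.
have [zt _] := sub_eq_Node E.
have zcl : anc t z cl by rewrite /anc zt E !mem_Node !eqxx !orbT.
have zcr : anc t z cr by rewrite /anc zt E !mem_Node !eqxx !orbT.
have /andP[pz _] : sanc t p z by apply: children_sanc; rewrite // pE.
have cl_z : cl < z by apply: (bst_lt_left sb); rewrite mem_Node eqxx.
have z_cr : z < cr by apply: (bst_gt_right sb); rewrite mem_Node eqxx.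
rewrite /degS (@eq_in_count _ _ (mem [:: cl; cr; p])).
  apply: count_mem_subset; last 2 first.
  - exact: bst_uniq.
  - by move=> x; rewrite !in_cons in_nil orbF => /or3P[] /eqP->;
      [exact: anc_mem2 zcl | exact: anc_mem2 zcr | exact: anc_mem1 pz].
  rewrite /= !in_cons in_nil !orbF andbT negb_or -andbA; apply/and3P; split.
  - by rewrite neq_ltn (ltn_trans cl_z z_cr).
  - apply/eqP=> clp; rewrite -clp in pz.
    by move: cl_z; rewrite (anc_antisym t_bst zcl pz) ltnn.
  - apply/eqP=> crp; rewrite -crp in pz.
    by move: z_cr; rewrite (anc_antisym t_bst zcr pz) ltnn.
move=> u _; rewrite /adj steinerE pE /children E /= !in_cons in_nil !orbF -orbA.
by apply: andb_idl => /or3P[] /eqP->.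
Qed.

(* Either [z] is the root, hence a finger, or [z] has degree 3 in S(T,F). *)
Lemma pseudo_branching y y' z : above_finger t F y -> above_finger t F y' ->
  anc t z y -> anc t z y' -> y < z < y' -> pseudo t F z.
Proof.
move=> fy fy' zy zy' /andP[y_z z_y']; have zt := anc_mem1 zy.
rewrite /pseudo zt; have [<- | root_z] := eqVneq root z; first by rewrite root_finger.
case: (sub_mem zt) => L [R E]; have sb : bst (Node L z R) by rewrite -E bst_sub.
have yL : y \in nodes L by apply: bst_mem_lt sb _ y_z; rewrite -E; case/andP: zy.
have y'R : y' \in nodes R by apply: bst_mem_gt sb _ z_y'; rewrite -E; case/andP: zy'.
case: L yL E sb => // l1 cl l2 yL; case: R y'R => // r1 cr r2 y'R E sb.
have fcl : above_finger t F cl.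
  apply: above_finger_anc fy; rewrite -(@anc_subE _ z) // E ?mem_Node ?eqxx ?orbT //.
  by rewrite anc_left ?mem_Node ?eqxx // anc_root.
have fcr : above_finger t F cr.
  apply: above_finger_anc fy'; rewrite -(@anc_subE _ z) // E ?mem_Node ?eqxx ?orbT //.
  by rewrite anc_right ?mem_Node ?eqxx ?orbT // anc_root.
have [p pE] : exists p, forall u, (z \in children t u) = (u == p).
  by apply: children_parent => //; rewrite t_root; apply: contra_neq root_z => -[].
have /andP[pz _] : sanc t p z by apply: children_sanc; rewrite // pE.
have fz := above_finger_anc zy fy.
by rewrite steinerE fz (degS_eq3 E pE fcl fcr (above_finger_anc pz fz)) eqxx orbT.
Qed.

Lemma tendon_ok_between x y z : tendon_ok t F x y -> sanc t x z -> sanc t z y ->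
  ~~ pseudo t F z.
Proof.
case/and4P=> _ _ _ /allP inner xz zy.
have zt : z \in nodes t by case/andP: xz => /anc_mem2.
by move: (inner z zt); rewrite xz zy.
Qed.

Lemma tendon_branch_free x y a w : tendon_ok t F x y -> sanc t x a -> anc t a y ->
  anc t a w -> above_finger t F w -> anc t w y \/ anc t y w.
Proof.
move=> tok xa ay aw fw.
have fy : above_finger t F y by case/and4P: tok => _ /pseudo_above_finger.
case: (anc_split_below t_bst aw ay) => [| | [z [az zw zy wzy]]]; [by left | by right |].
have pz : pseudo t F z.
  case/orP: wzy => wzy; first exact: pseudo_branching fw fy zw zy wzy.
  exact: pseudo_branching fy fw zy zw wzy.
have zny : z != y by move: wzy; apply: contraTneq => ->; rewrite ltnn andbF.
have : ~~ pseudo t F z.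
  by apply: tendon_ok_between tok (sanc_anc_trans t_bst xa az) _; rewrite /sanc zy zny.
by rewrite pz.
Qed.

Lemma half_range_closed x y b : tendon_ok t F x y -> Defs.half t x y b != [::] ->
  range_closed (above_finger t F) (Defs.half t x y b).
Proof.
move=> tok nz k fk; have kt : k \in nodes t by case/hasP: fk => f _ /anc_mem1.
move: (key_range_mem nz); case: (key_range _) => m M /=.
rewrite !mem_half => /andP[/and3P[xm /andP[my nmy] side_m] /and3P[xM /andP[My nMy] side_M]].
move=> /andP[mk kM].
have side_k : if b then k < y else y < k.
  move: side_m side_M; case: (b) => /= ms Ms; first exact: leq_ltn_trans kM Ms.
  exact: leq_trans ms mk.
have [a [xa ay ak]] : exists a, [/\ sanc t x a, anc t a y & anc t a k].
  have m_k : minn m M <= k by rewrite geq_min mk.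
  have k_M : k <= maxn m M by rewrite leq_max kM orbT.
  case/orP: (anc_total t_bst my My) => [mM | Mm].
    by exists m; split=> //; apply: anc_contig t_bst mM m_k k_M kt.
  by exists M; split=> //; apply: anc_contig t_bst Mm _ _ kt; rewrite (minnC, maxnC).
rewrite (sanc_anc_trans t_bst xa ak) side_k andbT /=.
case: (tendon_branch_free tok xa ay ak fk) => [ky | yk].
  by rewrite /sanc ky; move: side_k; case: (b) => /= [/ltn_eqF | /gtn_eqF] ->.
(* Below [y], [k] lies on the same side of [m] and of [M] as [y]. *)
move: side_m side_M; case: (b) => /= side_m side_M.
  by move: kM; rewrite leqNgt -(anc_side t_bst My nMy yk) side_M.
have km : k = m.
  apply/eqP; rewrite eqn_leq mk andbT leqNgt -(anc_side t_bst my nmy yk).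
  by rewrite leq_gtF // ltnW.
by rewrite -km in my nmy; rewrite (anc_antisym t_bst my yk) eqxx in nmy.
Qed.

Lemma tendon_ok_top_unique x x' y z : tendon_ok t F x y -> tendon_ok t F x' y ->
  sanc t x z -> sanc t x' z -> anc t z y -> x = x'.
Proof.
move=> tok tok' xz x'z zy; have [// | nxx'] := eqVneq x x'.
case/andP: (xz) (x'z) => x_z _ /andP[x'_z _].
case/orP: (anc_total t_bst x_z x'_z) => a.
  have : ~~ pseudo t F x'.
    by apply: tendon_ok_between tok _ (sanc_anc_trans t_bst x'z zy); rewrite /sanc a nxx'.
  by case/and4P: tok' => ->.
have : ~~ pseudo t F x.
  by apply: tendon_ok_between tok' _ (sanc_anc_trans t_bst xz zy); rewrite /sanc a eq_sym nxx'.
by case/and4P: tok => ->.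
Qed.

Lemma half_tendons_disjoint x y b x' y' b' z :
  tendon_ok t F x y -> tendon_ok t F x' y' ->
  z \in Defs.half t x y b -> z \in Defs.half t x' y' b' -> HT x y b = HT x' y' b'.
Proof.
move=> tok tok'; rewrite !mem_half.
move=> /and3P[xz /andP[zy _] side] /and3P[x'z /andP[zy' _] side'].
have [eyy' | yy'] := eqVneq y y'.
  subst y'; rewrite -(tendon_ok_top_unique tok tok' xz x'z zy).
  by case: b b' side side' => [] [] // /ltn_trans lt /lt; rewrite ltnn.
case/and4P: (tok) => _ py _ _; case/and4P: (tok') => _ py' _ _.
case: (tendon_branch_free tok xz zy zy' (pseudo_above_finger py')) => [y'y | yy'_anc].
  have : ~~ pseudo t F y'.
    apply: tendon_ok_between tok (sanc_anc_trans t_bst xz zy') _.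
    by rewrite /sanc y'y eq_sym yy'.
  by rewrite py'.
have : ~~ pseudo t F y.
  by apply: tendon_ok_between tok' (sanc_anc_trans t_bst x'z zy) _; rewrite /sanc yy'_anc yy'.
by rewrite py.
Qed.

Lemma hand_nodes_nonempty e : in_hand t F e -> elt_nodes t e != [::].
Proof. by case: e => [f | x y b] //= /andP[]. Qed.

Lemma hand_nodes_above e : in_hand t F e -> {subset elt_nodes t e <= above_finger t F}.
Proof.
case: e => [f | x y b] /=.
  by move=> pf z; rewrite inE => /eqP->; apply: pseudo_above_finger.
case/andP=> /and4P[_ py _ _] _ z; rewrite mem_half => /and3P[_ /andP[zy _] _].
exact: above_finger_anc zy (pseudo_above_finger py).
Qed.

Lemma hand_range_closed e : in_hand t F e -> range_closed (above_finger t F) (elt_nodes t e).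
Proof.
case: e => [f | x y b] /= he; last by case/andP: he => tok nz; apply: half_range_closed.
by move=> k _; rewrite /key_range /= minnn maxn0 -eqn_leq inE eq_sym.
Qed.

Lemma hand_nodes_disjoint e1 e2 z : in_hand t F e1 -> in_hand t F e2 ->
  z \in elt_nodes t e1 -> z \in elt_nodes t e2 -> e1 = e2.
Proof.
case: e1 => [f | x y b]; case: e2 => [g | x' y' b'] /=.
- by move=> _ _; rewrite !inE => /eqP-> /eqP->.
- move=> pf /andP[tok _]; rewrite inE => /eqP->; rewrite mem_half => /and3P[x'f fy' _].
  by move: (tendon_ok_between tok x'f fy'); rewrite pf.
- move=> /andP[tok _] pg; rewrite mem_half inE => /and3P[xz zy _] /eqP zg.
  by move: (tendon_ok_between tok xz zy); rewrite zg pg.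
- by move=> /andP[tok _] /andP[tok' _]; apply: half_tendons_disjoint.
Qed.

End RootedFingers.

Theorem lemma15 (t : tree) (F : seq nat) :
  bst t ->
  {subset F <= nodes t} ->
  (exists2 r, troot t = Some r & r \in F) ->
  forall e1 e2 : hand_elt,
    in_hand t F e1 -> in_hand t F e2 -> e1 <> e2 ->
    disjoint_iv (interval t e1) (interval t e2).
Proof.
(* Fingers outside [t] lie below no node. *)
move=> t_bst _ [root t_root root_finger] e1 e2 h1 h2 e12.
apply: (@disjoint_key_range (above_finger t F)).
- exact: hand_nodes_nonempty h1.
- exact: hand_nodes_nonempty h2.
- exact/(hand_nodes_above t_bst t_root root_finger h1).
- exact/(hand_nodes_above t_bst t_root root_finger h2).
- exact/(hand_range_closed t_bst t_root root_finger h1).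
- exact/(hand_range_closed t_bst t_root root_finger h2).
by move=> z z1 z2; apply/e12/(hand_nodes_disjoint t_bst t_root root_finger h1 h2 z1 z2).
Qed.
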